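(* Consider the algebra of Laurent polynomials in nonzero variables $a,b,c,d,e,f,g,h,i$ with the log-canonical Poisson bracket determined by $\{a,b\}=0,\ \{a,c\}=-\tfrac14 ac,\ \{a,d\}=-\tfrac14 ad,\ \{a,e\}=0,\ \{a,f\}=\tfrac14 af,\ \{a,g\}=-\tfrac14 ag,\ \{a,h\}=\tfrac14 ah,\ \{a,i\}=\tfrac14 ai,$ $\{b,c\}=\tfrac14 bc,\ \{b,d\}=0,\ \{b,e\}=\tfrac14 be,\ \{b,f\}=\tfrac14 bf,\ \{b,g\}=0,\ \{b,h\}=-\tfrac14 bh,\ \{b,i\}=0,$ $\{c,d\}=-\tfrac14 cd,\ \{c,e\}=\tfrac14 ce,\ \{c,f\}=-\tfrac14 cf,\ \{c,g\}=\{c,h\}=0,\ \{c,i\}=\tfrac14 ci,$ $\{d,e\}=-\tfrac14 de,\ \{d,f\}=\{d,g\}=\{d,h\}=0,\ \{d,i\}=\tfrac14 di,$ $\{e,f\}=-\tfrac14 ef,\ \{e,g\}=\{e,h\}=\{e,i\}=0,$ $\{f,g\}=-\tfrac14 fg,\ \{f,h\}=\tfrac14 fh,\ \{f,i\}=0,\ \{g,h\}=\tfrac14 gh,\ \{g,i\}=-\tfrac14 gi,\ \{h,i\}=0$. Then $bdeghi$ is a Casimir element, and it is the only Casimir (so the generic symplectic leaves are $8$-dimensional).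
   Context: A log-canonical bracket is extended from the generators to all Laurent polynomials by bilinearity, antisymmetry and the Leibniz rule. (These are the $\lambda$-lengths of a complete system of arcs on a Riemann sphere with one hole with six bordered cusps — the $PII^{JM}$ case.) *)

(* Laurent polynomials in 9 variables a,b,c,d,e,f,g,h,i
   (indices 0..8) over a field R, represented as formal finite sums of terms
   (coefficient, exponent vector in Z^9). Two representations denote the same
   Laurent polynomial iff all coefficients ([lcoef]) agree. *)
From HB Require Import structures.
From mathcomp Require Import all_boot all_order all_algebra.
Set Implicit Arguments. Unset Strict Implicit. Unset Printing Implicit Defensive.
Import Order.TTheory GRing.Theory Num.Theory.
Local Open Scope ring_scope.

Definition expo := 'rV[int]_9.

Definition laurent (R : Type) := seq (R * expo).

Definition lcoef (R : fieldType) (P : laurent R) (w : expo) : R :=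
  \sum_(t <- P | t.2 == w) t.1.

Definition leq_laurent (R : fieldType) (P Q : laurent R) : Prop :=
  forall w, lcoef P w = lcoef Q w.

(* 4 * {x_i, x_j} / (x_i x_j) for the generators, rows/columns a..i *)
Definition Btable : seq (seq int) :=
  [:: [:: 0; 0;-1;-1; 0; 1;-1; 1; 1];
      [:: 0; 0; 1; 0; 1; 1; 0;-1; 0];
      [:: 1;-1; 0;-1; 1;-1; 0; 0; 1];
      [:: 1; 0; 1; 0;-1; 0; 0; 0; 1];
      [:: 0;-1;-1; 1; 0;-1; 0; 0; 0];
      [::-1;-1; 1; 0; 1; 0;-1; 1; 0];
      [:: 1; 0; 0; 0; 0; 1; 0; 1;-1];
      [::-1; 1; 0; 0; 0;-1;-1; 0; 0];
      [::-1; 0;-1;-1; 0; 0; 1; 0; 0]].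

Definition Bc (R : fieldType) (i j : 'I_9) : R :=
  (nth 0 (nth [::] Btable i) j)%:~R / 4%:R.

(* {x^u, x^v} = (\sum_{i,j} u_i v_j Bc i j) x^(u+v): the unique extension of
   the generator brackets by bilinearity, antisymmetry and Leibniz rule. *)
Definition mono_form (R : fieldType) (u v : expo) : R :=
  \sum_(i < 9) \sum_(j < 9) (u ord0 i)%:~R * (v ord0 j)%:~R * Bc R i j.

Definition lbracket (R : fieldType) (P Q : laurent R) : laurent R :=
  [seq (p.1 * q.1 * mono_form R p.2 q.2, p.2 + q.2) | p <- P, q <- Q].

Definition casimir (R : fieldType) (P : laurent R) : Prop :=
  forall Q : laurent R, leq_laurent (lbracket P Q) [::].

Definition v_bdeghi : expo :=
  \row_(j < 9) (if nat_of_ord j \in [:: 1; 3; 4; 6; 7; 8]%N then 1 else 0)%:Z.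

Definition laurent_in_bdeghi (R : fieldType) (s : seq (R * int)) : laurent R :=
  [seq (t.1, t.2 *: v_bdeghi) | t <- s].

(* For a log-canonical bracket, {x^u, x^w} = <u B, w>/4 x^(u+w) with B the
   integer matrix of [Btable].  Bracketing P with a single generator x_j
   isolates each coefficient of P, so in characteristic 0 the Laurent
   polynomial P is a Casimir exactly when every exponent in its support lies
   in the left kernel of B.  Solving u B = 0 over Z shows that this kernel is
   Z (0,1,0,1,1,0,1,1,1), the exponent of bdeghi. *)
From mathcomp Require Import all_boot all_order all_algebra zify ring.
Set Implicit Arguments. Unset Strict Implicit. Unset Printing Implicit Defensive.
Import Order.TTheory GRing.Theory Num.Theory.
Local Open Scope ring_scope.

Definition Bmx : 'M[int]_9 := \matrix_(i, j) nth 0 (nth [::] Btable i) j.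

Lemma big_ord9 (V : nmodType) (F : 'I_9 -> V) : \sum_(i < 9) F i =
  F (inord 0) + (F (inord 1) + (F (inord 2) + (F (inord 3) + (F (inord 4) +
  (F (inord 5) + (F (inord 6) + (F (inord 7) + (F (inord 8) + 0)))))))).
Proof.
rewrite -(eq_bigr _ (fun i _ => congr1 F (inord_val i))) /=.
by rewrite -(big_mkord xpredT (fun i => F (inord i))) unlock.
Qed.

Lemma mulmx_BmxE (u : expo) (j : 'I_9) :
  (u *m Bmx) ord0 j = \sum_(i < 9) u ord0 i * nth 0 (nth [::] Btable i) j.
Proof. by rewrite mxE; apply: eq_bigr => i _; rewrite mxE. Qed.

Lemma v_bdeghi_Bmx : v_bdeghi *m Bmx = 0.
Proof.
apply/rowP => j; rewrite mulmx_BmxE big_ord9 !mxE !inordK //=.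
by case: j => [[|[|[|[|[|[|[|[|[|//]]]]]]]]] ?].
Qed.

Lemma Bmx_kerP (u : expo) : u *m Bmx = 0 <-> exists k : int, u = k *: v_bdeghi.
Proof.
split=> [uB0|[k ->]]; last by rewrite -scalemxAl v_bdeghi_Bmx scaler0.
exists (u ord0 (inord 1)).
have col j : (u *m Bmx) ord0 j = 0 by rewrite uB0 mxE.
move: (col (inord 0)) (col (inord 1)) (col (inord 2)) (col (inord 3)) (col (inord 4))
  (col (inord 5)) (col (inord 6)) (col (inord 7)) (col (inord 8)).
rewrite !mulmx_BmxE !big_ord9 !inordK //= => e0 e1 e2 e3 e4 e5 e6 e7 e8.
apply/rowP => j; rewrite !mxE -(inord_val j) (_ : (0 : 'I_1) = ord0); last exact/val_inj.
by case: j => [[|[|[|[|[|[|[|[|[|//]]]]]]]]] ?]; rewrite !inordK //=; lia.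
Qed.

(* Exponents occurring in P, including those whose total coefficient vanishes. *)
Definition lsupp (R : Type) (P : laurent R) : seq expo := undup (unzip2 P).

Section LogCanonicalBracket.
Variable R : fieldType.
Implicit Types (P Q : laurent R) (u w : expo).

Lemma mono_formE u w :
  mono_form R u w = (\sum_(j < 9) w ord0 j * (u *m Bmx) ord0 j)%:~R / 4%:R.
Proof.
rewrite /mono_form /Bc exchange_big rmorph_sum mulr_suml; apply: eq_bigr => j _.
rewrite mulmx_BmxE mulr_sumr rmorph_sum mulr_suml; apply: eq_bigr => i _.
by rewrite !rmorphM /=; ring.
Qed.

Lemma mono_form_ker u w : u *m Bmx = 0 -> mono_form R u w = 0.
Proof. by move=> uB0; rewrite mono_formE uB0 big1 ?mul0r // => j _; rewrite mxE mulr0. Qed.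

Lemma mono_form_delta u j :
  mono_form R u (delta_mx 0 j) = ((u *m Bmx) ord0 j)%:~R / 4%:R.
Proof.
rewrite mono_formE (bigD1 j) //= big1 ?addr0 => [|k kj]; first by rewrite mxE !eqxx mul1r.
by rewrite mxE (negbTE kj) andbF mul0r.
Qed.

Lemma lcoef_nil w : lcoef ([::] : laurent R) w = 0.
Proof. by rewrite /lcoef big_nil. Qed.

Lemma mem_lsupp P u : lcoef P u != 0 -> u \in lsupp P.
Proof.
apply: contraR; rewrite mem_undup => uP; rewrite /lcoef big1_seq // => t /andP[/eqP tu tP].
by case/negP: uP; rewrite -tu; apply: map_f.
Qed.

Lemma big_laurent_lcoef P (G : expo -> R) :
  \sum_(p <- P) p.1 * G p.2 = \sum_(u <- lsupp P) lcoef P u * G u.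
Proof.
have lcoefG u : lcoef P u * G u = \sum_(p <- P) (p.2 == u)%:R * (p.1 * G p.2).
  rewrite /lcoef mulr_suml big_mkcond; apply: eq_bigr => p _.
  by case: eqP => [->|]; rewrite ?mul1r ?mul0r.
rewrite (eq_bigr _ (fun u _ => lcoefG u)) exchange_big /= big_seq [RHS]big_seq.
apply: eq_bigr => p pP; rewrite -mulr_suml.
have p2P : p.2 \in lsupp P by rewrite mem_undup; apply: map_f.
rewrite (big_rem _ p2P) eqxx big1_seq /= ?addr0 ?mul1r // => u u_rem.
by case: eqP u_rem => // <-; rewrite mem_rem_uniqF // undup_uniq.
Qed.

Lemma lcoefE P w : lcoef P w = \sum_(p <- P) p.1 * (p.2 == w)%:R.
Proof.
rewrite /lcoef big_mkcond [RHS](eq_bigr (fun p => if p.2 == w then p.1 else 0)) // => p _.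
by case: eqP; rewrite ?mulr1 ?mulr0.
Qed.

Lemma lcoef_lbracket P Q w : lcoef (lbracket P Q) w =
  \sum_(u <- lsupp P) lcoef P u * \sum_(q <- Q | u + q.2 == w) q.1 * mono_form R u q.2.
Proof.
rewrite -big_laurent_lcoef /lcoef /lbracket big_mkcond big_allpairs_dep /=.
apply: eq_bigr => p _; rewrite mulr_sumr [RHS]big_mkcond; apply: eq_bigr => q _ /=.
by case: ifP; rewrite ?mulr0 // mulrA.
Qed.

Lemma lcoef_lbracket_mono P u e :
  lcoef (lbracket P [:: (1, e)]) (u + e) = lcoef P u * mono_form R u e.
Proof.
rewrite /lcoef /lbracket allpairs1r big_map mulr_suml.
by apply: eq_big => [p|p /= /eqP/addIr ->] /=; rewrite ?(inj_eq (addIr e)) ?mulr1.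
Qed.

Lemma casimir_ker P : (forall u, lcoef P u != 0 -> u *m Bmx = 0) -> casimir P.
Proof.
move=> Pker Q w; rewrite lcoef_lbracket lcoef_nil big1_seq // => u _.
have [->|/Pker uB0] := eqVneq (lcoef P u) 0; first by rewrite mul0r.
by rewrite big1 ?mulr0 // => q _; rewrite mono_form_ker ?mulr0.
Qed.

Hypothesis charR0 : [pchar R] =i pred0.

Lemma pchar0_intr_eq0 (z : int) : (z%:~R == 0 :> R) = (z == 0).
Proof.
have natr_eq0 := (pcharf0P R).1 charR0.
by case: z => n; rewrite ?NegzE ?mulrNz ?oppr_eq0 -pmulrn natr_eq0.
Qed.

Lemma ker_casimir P u : casimir P -> lcoef P u != 0 -> u *m Bmx = 0.
Proof.
move=> PC Pu0; apply/rowP => j; rewrite [RHS]mxE; apply/eqP.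
have four_neq0 : 4%:R != 0 :> R by rewrite ((pcharf0P R).1 charR0).
have := PC [:: (1, delta_mx 0 j)] (u + delta_mx 0 j).
rewrite lcoef_lbracket_mono lcoef_nil mono_form_delta => /eqP.
by rewrite !mulf_eq0 (negbTE Pu0) invr_eq0 (negbTE four_neq0) pchar0_intr_eq0 orbF.
Qed.

Lemma casimirP P : casimir P <-> forall u, lcoef P u != 0 -> u *m Bmx = 0.
Proof. by split=> [PC u|]; [apply: ker_casimir | apply: casimir_ker]. Qed.
End LogCanonicalBracket.

Lemma v_bdeghi_b : v_bdeghi ord0 (inord 1) = 1.
Proof. by rewrite mxE inordK. Qed.

Lemma laurent_in_bdeghiP (R : fieldType) (P : laurent R) :
  (forall u, lcoef P u != 0 -> exists k : int, u = k *: v_bdeghi) <->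
  exists s, leq_laurent P (laurent_in_bdeghi s).
Proof.
split=> [Pv | [s Ps] u]; last first.
  rewrite Ps => /mem_lsupp; rewrite mem_undup /unzip2 -map_comp => /mapP[t _ ->].
  by exists t.2.
exists [seq (lcoef P u, u ord0 (inord 1)) | u <- lsupp P] => w.
rewrite !lcoefE (big_laurent_lcoef P (fun u => (u == w)%:R)) /laurent_in_bdeghi !big_map.
apply: eq_bigr => u _ /=.
have [->|/Pv[k ->]] := eqVneq (lcoef P u) 0; first by rewrite !mul0r.
by rewrite [_ ord0 (inord 1)]mxE v_bdeghi_b mulr1.
Qed.

Theorem mainTheorem7 (R : fieldType) (HR : [pchar R] =i pred0) :
  casimir [:: ((1 : R), v_bdeghi)] /\
  (forall P : laurent R,
     casimir P <-> exists s : seq (R * int), leq_laurent P (laurent_in_bdeghi s)).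
Proof.
split=> [|P].
  apply: casimir_ker => u; rewrite /lcoef big_cons big_nil /=.
  by case: (v_bdeghi =P u) => [<- _|_]; rewrite ?v_bdeghi_Bmx ?eqxx.
split=> [/(casimirP HR) Pker | /laurent_in_bdeghiP Pv].
  by apply/laurent_in_bdeghiP => u /Pker /Bmx_kerP.
by apply/(casimirP HR) => u /Pv /Bmx_kerP.
Qed.
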